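(* Let $A\in\mathbb{R}^{2\times 2}$ with $\mathrm{Re}(\lambda_1(A))>\mathrm{Re}(\lambda_2(A))$ (so $n=2$, $r=1$), and consider the Oja flow $\frac{dU}{dt}=(I_2-UU^{\top})AU$ with $U(0)\in\mathbb{R}^{2}$, $U(0)^{\top}U(0)=1$. Let $K(t)=\Psi^{-1}U(t)$ and $\Sigma=\Psi^{\top}\Psi$ with entries $\Sigma_{11},\Sigma_{22}$ on the diagonal. If $K(0)\neq\begin{bsmallmatrix}0,&\pm\Sigma_{22}^{-1/2}\end{bsmallmatrix}^{\top}$, then $U(t)=\Psi K(t)$ converges to $\mathcal{U}=\{\pm\Sigma_{11}^{-1/2}\psi_1(A)\}$.
   Context: $\Psi=[\psi_1(A),\psi_2(A)]$ is the matrix of unit-norm eigenvectors of $A$ for $\lambda_1(A),\lambda_2(A)$ (these eigenvalues are real and distinct under the hypothesis, so $\Psi$ is real and invertible). *)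

From HB Require Import structures.
From mathcomp Require Import all_boot all_order all_algebra.
From mathcomp Require Import all_classical all_reals all_analysis.
Set Implicit Arguments. Unset Strict Implicit. Unset Printing Implicit Defensive.
Import Order.TTheory GRing.Theory Num.Theory.
Import numFieldNormedType.Exports.
Local Open Scope ring_scope.

Definition vec2 (R : ringType) (a b : R) : 'cV[R]_2 :=
  \col_(i < 2) (if i == ord0 then a else b).

Definition dotc (R : ringType) (n : nat) (u v : 'cV[R]_n) : R :=
  (u^T *m v) ord0 ord0.

Definition oja_rhs (R : ringType) (n : nat) (A : 'M[R]_n) (U : 'cV[R]_n)
  : 'cV[R]_n := (1%:M - U *m U^T) *m A *m U.

From HB Require Import structures.
From mathcomp Require Import all_boot all_order all_algebra.
From mathcomp Require Import all_classical all_reals all_analysis.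
From mathcomp Require Import ring lra.
Import Order.TTheory GRing.Theory Num.Theory.
Import numFieldNormedType.Exports.
Local Open Scope ring_scope.
Local Open Scope classical_set_scope.

(* In the eigenbasis the Oja flow decouples: K = Psi^-1 U satisfies
   k_i' = (lambda_i - q) k_i with the common factor q = U^T A U, so
   k_1(t) = r exp(-(lambda1 - lambda2) t) k_0(t) with r = k_1(0) / k_0(0).
   The flow also keeps |U| = 1, since 1 - |U|^2 solves a linear ODE with zero
   initial value (uniqueness by Gronwall).  Hence U = k_0 (psi1 + o(1)) with
   k_0^2 -> 1, and k_0, which never vanishes, has a constant sign s.  As psi1
   and psi2 are unit vectors, Sigma has unit diagonal, and the excluded initial
   values K(0) = (0, +-1) are exactly the unit U(0) with k_0(0) = 0. *)

Section WithinContinuity.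
Context {R : realType} (D : set R).
Implicit Types f g : R -> R.

Lemma within_continuous_cst (c : R) : {within D, continuous (fun=> c)}.
Proof. by apply: continuous_subspaceT => x; exact: cvg_cst. Qed.

Lemma within_continuous_mul f g :
  {within D, continuous f} -> {within D, continuous g} ->
  {within D, continuous (fun x => f x * g x)}.
Proof. by move=> cf cg x; exact: continuousM (cf x) (cg x). Qed.

Lemma within_continuous_sub f g :
  {within D, continuous f} -> {within D, continuous g} ->
  {within D, continuous (fun x => f x - g x)}.
Proof. by move=> cf cg x; exact: continuousB (cf x) (cg x). Qed.

End WithinContinuity.

Section RealCalculus.
Context {R : realType}.

Lemma continuous_expRM (c : R) : continuous (fun t : R => expR (c * t)).
Proof.
move=> t; apply: (@continuous_comp _ _ _ ( *%R c) expR).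
  exact: mulrl_continuous.
exact: continuous_expR.
Qed.

Lemma is_deriveMl (c : R) {f : R -> R} {t df : R} :
  is_derive t 1 f df -> is_derive t 1 (fun s => c * f s) (c * df).
Proof. by move=> fdf; have := is_deriveZ c fdf. Qed.

Lemma is_derive_expRM (c t : R) :
  is_derive t 1 (fun s => expR (c * s)) (c * expR (c * t)).
Proof.
have := is_derive1_comp (is_derive_expR (c * t)) (is_deriveMl c (is_derive_id t 1)).
by rewrite mulr1 mulrC.
Qed.

Lemma cvg_expRNM (c : R) : 0 < c -> expR (- (c * t)) @[t --> +oo] --> (0 : R).
Proof.
move=> c_gt0; have ct_cvg : (fun t => c * t) @ +oo --> +oo.
  apply/cvgryPge => M; apply: filterS (nbhs_pinfty_ge (num_real (M / c))) => t.
  by rewrite ler_pdivrMr // mulrC.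
exact: (cvg_comp (fun t => c * t) (fun x => expR (- x)) ct_cvg (@cvgr_expR R)).
Qed.

End RealCalculus.

Section MatrixCalculus.
Context {R : realType}.

Lemma is_derive_mxE {m n} {f : R -> 'M[R]_(m, n)} {t : R} {df : 'M[R]_(m, n)} i j :
  is_derive t 1 f df -> is_derive t 1 (fun s => f s i j) (df i j).
Proof.
move=> fdf; have fd : derivable f t 1 by [].
apply: DeriveDef; first by move/derivable_mxP : fd.
by rewrite -[df]derive_val derive_mx // mxE.
Qed.

Lemma is_derive_mx {m n} {f : R -> 'M[R]_(m, n)} {t : R} {df : 'M[R]_(m, n)} :
  (forall i j, is_derive t 1 (fun s => f s i j) (df i j)) -> is_derive t 1 f df.
Proof.
move=> fdf; have fd : derivable f t 1 by apply/derivable_mxP.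
apply: DeriveDef => //; rewrite derive_mx //.
by apply/matrixP => i j; rewrite mxE derive_val.
Qed.

Lemma is_derive_mulmx {m n p} (P : 'M[R]_(m, n)) {f : R -> 'M[R]_(n, p)} {t : R}
    {df : 'M[R]_(n, p)} :
  is_derive t 1 f df -> is_derive t 1 (fun s => P *m f s) (P *m df).
Proof.
move=> fdf; apply: is_derive_mx => i j.
rewrite mxE; under eq_fun do rewrite mxE.
rewrite -(fct_sumE _ _ (fun k s => P i k * f s k j)).
by apply: is_derive_sum => k; exact: is_deriveMl (is_derive_mxE k j fdf).
Qed.

Lemma dotcE {n} (u v : 'cV[R]_n) : dotc u v = \sum_i u i 0 * v i 0.
Proof. by rewrite /dotc mxE; apply: eq_bigr => i _; rewrite mxE. Qed.

Lemma dotcC {n} (u v : 'cV[R]_n) : dotc u v = dotc v u.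
Proof. by rewrite !dotcE; apply: eq_bigr => i _; rewrite mulrC. Qed.

Lemma dotcZ {n} (a : R) (u : 'cV[R]_n) : dotc (a *: u) (a *: u) = a ^+ 2 * dotc u u.
Proof. by rewrite !dotcE mulr_sumr; apply: eq_bigr => i _; rewrite !mxE; ring. Qed.

Lemma dotc1_neq0 {n} (u : 'cV[R]_n) : dotc u u = 1 -> u != 0.
Proof. by apply: contra_eq_neq => ->; rewrite /dotc mulmx0 mxE eq_sym oner_neq0. Qed.

Lemma is_derive_dotc {n} {f g : R -> 'cV[R]_n} {t : R} {df dg : 'cV[R]_n} :
  is_derive t 1 f df -> is_derive t 1 g dg ->
  is_derive t 1 (fun s => dotc (f s) (g s)) (dotc df (g t) + dotc (f t) dg).
Proof.
move=> fdf gdg; rewrite !dotcE -big_split /=.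
under eq_fun do rewrite dotcE.
rewrite -(fct_sumE _ _ (fun i s => f s i 0 * g s i 0)).
apply: is_derive_sum => i.
apply: is_derive_eq (is_deriveM (is_derive_mxE i 0 fdf) (is_derive_mxE i 0 gdg)) _.
by rewrite addrC [df i 0 * _]mulrC.
Qed.

Lemma continuous_mulmx_coord {m n} (P : 'M[R]_(m, n)) i :
  continuous (fun u : 'cV[R]_n => (P *m u) i 0).
Proof.
under eq_fun do rewrite mxE.
apply: continuous_big => [|j _]; first exact: add_continuous.
move=> u; apply: continuousM; first exact: cst_continuous.
exact: coord_continuous.
Qed.

Lemma continuous_dotc_mulmx {n} (A : 'M[R]_n) :
  continuous (fun u : 'cV[R]_n => dotc u (A *m u)).
Proof.
under eq_fun do rewrite dotcE.
apply: continuous_big => [|i _]; first exact: add_continuous.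
move=> u; apply: continuousM; first exact: coord_continuous.
exact: continuous_mulmx_coord.
Qed.

Lemma within_continuous_mulmx_coord {m n} (D : set R) (P : 'M[R]_(m, n))
    (U : R -> 'cV[R]_n) i :
  {within D, continuous U} -> {within D, continuous (fun s => (P *m U s) i 0)}.
Proof. by move=> cU s; exact: continuous_comp (cU s) (continuous_mulmx_coord P i _). Qed.

Lemma within_continuous_dotc_mulmx {n} (D : set R) (A : 'M[R]_n)
    (U : R -> 'cV[R]_n) :
  {within D, continuous U} ->
  {within D, continuous (fun s => dotc (U s) (A *m U s))}.
Proof. by move=> cU s; exact: continuous_comp (cU s) (continuous_dotc_mulmx A _). Qed.

End MatrixCalculus.

Section ScalarODE.
Context {R : realType}.
Implicit Types f g k q : R -> R.

Lemma gronwall_zero f (df m : R -> R) :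
  {within `[0, +oo[, continuous f} -> {within `[0, +oo[, continuous m} ->
  (forall t : R, 0 < t -> is_derive t 1 f (df t)) ->
  (forall t : R, 0 < t -> df t <= m t * f t) ->
  (forall t : R, 0 <= t -> 0 <= f t) -> f 0 = 0 ->
  forall t : R, 0 <= t -> f t = 0.
Proof.
move=> cf cm fdf df_le f_ge0 f0 T; rewrite le_eqVlt => /orP[/eqP<- //|T0].
have sub0T : `[0, T] `<=` `[0, +oo[ by apply: subset_itvl; rewrite bnd_simp.
have [c _ m_le] := EVT_max (ltW T0) (continuous_subspaceW sub0T cm).
(* On [0, T] we have m <= M := m c, so f(t) exp(-M t) is nonincreasing. *)
pose M := m c; pose G t := f t * expR (- M * t).
have Gd t : t \in `]0, T[%R -> is_derive t 1 G
    (f t * (- M * expR (- M * t)) + expR (- M * t) * df t).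
  rewrite in_itv /= => /andP[t0 _].
  exact: is_deriveM (fdf t t0) (is_derive_expRM (- M) t).
have cG : {within `[0, T], continuous G}.
  apply: within_continuous_mul; first exact: continuous_subspaceW sub0T cf.
  exact: continuous_subspaceT (continuous_expRM (- M)).
have [d d0T GT] := MVT T0 Gd cG.
move: d0T; rewrite in_itv /= => /andP[d0 dT].
have m_d : m d <= M by apply: m_le; rewrite in_itv /= !ltW.
have dfd : df d <= M * f d.
  by apply: le_trans (df_le d d0) _; rewrite ler_wpM2r // f_ge0 // ltW.
have GT_le0 : G T <= 0.
  move: GT; rewrite /G f0 mul0r !subr0 => ->.
  apply: mulr_le0_ge0; last exact: ltW.
  have := expR_gt0 (- M * d); have := f_ge0 d (ltW d0); nra.
move: GT_le0; rewrite /G.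
have := expR_gt0 (- M * T); have := f_ge0 T (ltW T0); nra.
Qed.

Lemma linear_ode_zero g (a : R -> R) :
  {within `[0, +oo[, continuous g} -> {within `[0, +oo[, continuous a} ->
  (forall t : R, 0 < t -> is_derive t 1 g (a t * g t)) -> g 0 = 0 ->
  forall t : R, 0 <= t -> g t = 0.
Proof.
move=> cg ca gd g0 t t0.
suff /eqP : g t * g t = 0 by rewrite mulf_eq0 orbb => /eqP.
apply: (@gronwall_zero (fun s => g s * g s) (fun s => 2 * a s * (g s * g s))
                       (fun s => 2 * `|a s|)) t t0 => //.
- exact: within_continuous_mul.
- apply: within_continuous_mul; first exact: within_continuous_cst.
  by apply: within_continuous_comp ca => y _; exact: norm_continuous.
- move=> s s0; apply: is_derive_eq (is_deriveM (gd s s0) (gd s s0)) _.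
  by rewrite /GRing.scale /=; ring.
- move=> s _; rewrite -!mulrA; apply: ler_wpM2l => //.
  by apply: ler_wpM2r; [by rewrite -expr2 sqr_ge0|exact: ler_norm].
- by move=> s _; rewrite -expr2 sqr_ge0.
- by rewrite g0 mulr0.
Qed.

Lemma modes_ratio k0 k1 q (l0 l1 : R) :
  {within `[0, +oo[, continuous k0} -> {within `[0, +oo[, continuous k1} ->
  {within `[0, +oo[, continuous q} ->
  (forall t : R, 0 < t -> is_derive t 1 k0 ((l0 - q t) * k0 t)) ->
  (forall t : R, 0 < t -> is_derive t 1 k1 ((l1 - q t) * k1 t)) ->
  forall t : R, 0 <= t -> k0 0 * k1 t * expR ((l0 - l1) * t) = k1 0 * k0 t.
Proof.
move=> ck0 ck1 cq dk0 dk1 t t0; apply/eqP; rewrite -subr_eq0; apply/eqP.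
apply: (@linear_ode_zero
  (fun s => k0 0 * k1 s * expR ((l0 - l1) * s) - k1 0 * k0 s) (fun s => l0 - q s)) t t0.
- have cE : {within `[0, +oo[, continuous (fun s => expR ((l0 - l1) * s))}.
    exact: continuous_subspaceT (continuous_expRM _).
  by repeat first [apply: within_continuous_sub | apply: within_continuous_mul
                  | apply: within_continuous_cst | assumption].
- by apply: within_continuous_sub => //; exact: within_continuous_cst.
- move=> s s0.
  apply: is_derive_eq (is_deriveB (is_deriveM (is_deriveMl (k0 0) (dk1 s s0))
    (is_derive_expRM (l0 - l1) s)) (is_deriveMl (k1 0) (dk0 s s0))) _.
  by rewrite /GRing.scale /=; ring.
- by rewrite mulr0 expR0 mulr1 mulrC subrr.
Qed.

Lemma continuous_nonzero_sign k :
  {within `[0, +oo[, continuous k} -> (forall t : R, 0 <= t -> k t != 0) ->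
  exists2 s : R, (s = 1 \/ s = -1) & forall t : R, 0 <= t -> 0 < s * k t.
Proof.
move=> ck k_neq0.
have [s s_pm sk0] : exists2 s : R, (s = 1 \/ s = -1) & 0 < s * k 0.
  case: (ltgtP (k 0) 0) => [k0_lt0|k0_gt0|k0_eq0].
  - by exists (-1); [right|rewrite mulN1r oppr_gt0].
  - by exists 1; [left|rewrite mul1r].
  - by move: (k_neq0 0 (lexx 0)); rewrite k0_eq0 eqxx.
exists s => // t t0; rewrite ltNge; apply/negP => skt_le0.
have sub0t : `[0, t] `<=` `[0, +oo[ by apply: subset_itvl; rewrite bnd_simp.
have csk : {within `[0, t], continuous (fun x => s * k x)}.
  apply: within_continuous_mul; first exact: within_continuous_cst.
  exact: continuous_subspaceW sub0t ck.
have v0 : Num.min (s * k 0) (s * k t) <= 0 <= Num.max (s * k 0) (s * k t).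
  by rewrite ge_min skt_le0 orbT le_max (ltW sk0).
have [c c0t /eqP] := IVT t0 csk v0.
rewrite mulf_eq0 (negPf (k_neq0 c _)) ?orbF; last by move: c0t; rewrite in_itv /= => /andP[].
by case: s_pm => ->; rewrite ?oppr_eq0 oner_eq0.
Qed.

Lemma cvg_sign_of_sqr k :
  {within `[0, +oo[, continuous k} -> (forall t : R, 0 <= t -> k t != 0) ->
  k t ^+ 2 @[t --> +oo] --> (1 : R) ->
  exists2 s : R, (s = 1 \/ s = -1) & k t @[t --> +oo] --> s.
Proof.
move=> ck k_neq0 k2_cvg; have [s s_pm sk_gt0] := continuous_nonzero_sign _ ck k_neq0.
exists s => //.
have kE t : 0 <= t -> k t = s * Num.sqrt (k t ^+ 2).
  move=> t0; have := sk_gt0 t t0; rewrite sqrtr_sqr.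
  case: s_pm => ->; rewrite ?mul1r ?mulN1r => skt.
    by rewrite gtr0_norm.
  by rewrite ltr0_norm -?oppr_gt0 // opprK.
have : s * Num.sqrt (k t ^+ 2) @[t --> +oo] --> s * Num.sqrt 1.
  exact: cvgMl_tmp (cvg_comp _ _ k2_cvg (@sqrt_continuous R 1)).
rewrite sqrtr1 mulr1; apply: cvg_trans.
by apply: near_eq_cvg; near=> t; rewrite -kE.
Unshelve. all: by end_near. Qed.

End ScalarODE.

Section OjaFlow.
Context {R : realType} {n : nat} (A : 'M[R]_n).

Lemma oja_rhsE (u : 'cV[R]_n) : oja_rhs A u = A *m u - dotc u (A *m u) *: u.
Proof.
rewrite /oja_rhs -mulmxA mulmxBl mul1mx -!mulmxA; congr (_ - _).
by rewrite [_^T *m _]mx11_scalar mul_mx_scalar.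
Qed.

Lemma dotc_oja_rhs (u : 'cV[R]_n) :
  dotc u (oja_rhs A u) = dotc u (A *m u) * (1 - dotc u u).
Proof. by rewrite oja_rhsE /dotc mulmxBr -scalemxAr !mxE; ring. Qed.

Lemma oja_sqnorm_invariant (U : R -> 'cV[R]_n) :
  {within `[0, +oo[, continuous U} ->
  (forall t : R, 0 < t -> is_derive t 1 U (oja_rhs A (U t))) ->
  dotc (U 0) (U 0) = 1 -> forall t : R, 0 <= t -> dotc (U t) (U t) = 1.
Proof.
move=> cU dU U0 t t0; apply/eqP; rewrite -subr_eq0 -oppr_eq0 opprB; apply/eqP.
apply: (@linear_ode_zero _ (fun s => 1 - dotc (U s) (U s))
                           (fun s => - 2 * dotc (U s) (A *m U s))) t t0.
- apply: within_continuous_sub; first exact: within_continuous_cst.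
  have -> : (fun s => dotc (U s) (U s)) = fun s => dotc (U s) (1%:M *m U s).
    by apply/funext => s; rewrite mul1mx.
  exact: within_continuous_dotc_mulmx.
- apply: within_continuous_mul; first exact: within_continuous_cst.
  exact: within_continuous_dotc_mulmx.
- move=> s s0.
  apply: is_derive_eq (is_deriveB (is_derive_cst (1 : R) s 1)
                                  (is_derive_dotc (dU s s0) (dU s s0))) _.
  by rewrite dotcC dotc_oja_rhs sub0r; ring.
- by rewrite U0 subrr.
Qed.

Lemma oja_eigen_coord (Psi : 'M[R]_n) (d : 'rV[R]_n) (U : R -> 'cV[R]_n)
    (t : R) i :
  Psi \in unitmx -> A *m Psi = Psi *m diag_mx d ->
  is_derive t 1 U (oja_rhs A (U t)) ->
  is_derive t 1 (fun s => (invmx Psi *m U s) i 0)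
    ((d 0 i - dotc (U t) (A *m U t)) * (invmx Psi *m U t) i 0).
Proof.
move=> Psi_unit APsi dU.
have PA : invmx Psi *m A = diag_mx d *m invmx Psi.
  by rewrite -{1}(mulmxK Psi_unit A) APsi !mulmxA mulVmx // mul1mx.
apply: is_derive_eq (is_derive_mxE i 0 (is_derive_mulmx (invmx Psi) dU)) _.
by rewrite oja_rhsE mulmxBr mulmxA PA -mulmxA -scalemxAr mul_diag_mx !mxE mulrBl.
Qed.

End OjaFlow.

Section PlaneEigenvectors.
Context {F : fieldType} {n : nat}.

Lemma sum_ord2 (V : nmodType) (f : 'I_2 -> V) :
  \sum_(i < 2) f i = f ord0 + f ord_max.
Proof. by rewrite big_ord_recr big_ord1; congr (f _ + _); exact: val_inj. Qed.

Lemma ord2P (i : 'I_2) : i = ord0 \/ i = ord_max.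
Proof. by case: i => [[|[|//]] ?]; [left|right]; exact: val_inj. Qed.

Lemma cV2_eta (k : 'cV[F]_2) : k = vec2 (k ord0 0) (k ord_max 0).
Proof. by apply/matrixP => i j; rewrite (ord1 j) mxE; case: (ord2P i) => ->. Qed.

Lemma row_mx2_col0 (psi1 psi2 : 'cV[F]_n) i : row_mx psi1 psi2 i ord0 = psi1 i 0.
Proof. by rewrite -(row_mxEl psi1 psi2 i 0); congr (row_mx _ _ _ _); exact: val_inj. Qed.

Lemma row_mx2_col1 (psi1 psi2 : 'cV[F]_n) i :
  row_mx psi1 psi2 i ord_max = psi2 i 0.
Proof. by rewrite -(row_mxEr psi1 psi2 i 0); congr (row_mx _ _ _ _); exact: val_inj. Qed.

Lemma mulmx_row_mx2 (psi1 psi2 : 'cV[F]_n) (k : 'cV[F]_2) :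
  row_mx psi1 psi2 *m k = k ord0 0 *: psi1 + k ord_max 0 *: psi2.
Proof.
apply/matrixP => i j; rewrite (ord1 j) mxE sum_ord2 row_mx2_col0 row_mx2_col1.
by rewrite !mxE mulrC [_ * k _ _]mulrC.
Qed.

Lemma row_mx2_gram00 (psi1 psi2 : 'cV[F]_n) :
  ((row_mx psi1 psi2)^T *m row_mx psi1 psi2) ord0 ord0 = dotc psi1 psi1.
Proof.
by rewrite mxE /dotc mxE; apply: eq_bigr => i _; rewrite ![_^T _ _]mxE row_mx2_col0.
Qed.

Lemma row_mx2_gram11 (psi1 psi2 : 'cV[F]_n) :
  ((row_mx psi1 psi2)^T *m row_mx psi1 psi2) ord_max ord_max = dotc psi2 psi2.
Proof.
by rewrite mxE /dotc mxE; apply: eq_bigr => i _; rewrite ![_^T _ _]mxE row_mx2_col1.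
Qed.

Context {A : 'M[F]_n} {l1 l2 : F} {psi1 psi2 : 'cV[F]_n}.
Hypotheses (Apsi1 : A *m psi1 = l1 *: psi1) (Apsi2 : A *m psi2 = l2 *: psi2).

Lemma row_mx2_eigen :
  A *m row_mx psi1 psi2 = row_mx psi1 psi2 *m diag_mx (vec2 l1 l2)^T.
Proof.
rewrite mul_mx_row Apsi1 Apsi2 mul_mx_diag; apply/matrixP => i j; rewrite mxE.
by case: (ord2P j) => ->; rewrite ?row_mx2_col0 ?row_mx2_col1 !mxE mulrC.
Qed.

Lemma eigen_comb_eq0 (a b : F) :
  l1 != l2 -> psi1 != 0 -> psi2 != 0 -> a *: psi1 + b *: psi2 = 0 -> a = 0 /\ b = 0.
Proof.
move=> l12 psi1_neq0 psi2_neq0 ab0.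
have : A *m (a *: psi1 + b *: psi2) - l2 *: (a *: psi1 + b *: psi2)
       = (a * (l1 - l2)) *: psi1.
  rewrite mulmxDr -!scalemxAr Apsi1 Apsi2 scalerDr !scalerA mulrBr scalerBl opprD.
  by rewrite addrACA [l2 * b]mulrC subrr addr0 [l2 * a]mulrC.
rewrite ab0 mulmx0 scaler0 subrr => /esym/eqP.
rewrite scaler_eq0 (negPf psi1_neq0) orbF mulf_eq0 subr_eq0 (negPf l12) orbF.
move=> /eqP a0; split=> //; move: ab0; rewrite a0 scale0r add0r => /eqP.
by rewrite scaler_eq0 (negPf psi2_neq0) orbF => /eqP.
Qed.

End PlaneEigenvectors.

Lemma row_mx2_eigen_unitmx {F : fieldType} {A : 'M[F]_2} {l1 l2 : F}
    {psi1 psi2 : 'cV[F]_2} :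
  A *m psi1 = l1 *: psi1 -> A *m psi2 = l2 *: psi2 ->
  l1 != l2 -> psi1 != 0 -> psi2 != 0 -> row_mx psi1 psi2 \in unitmx.
Proof.
move=> Apsi1 Apsi2 l12 psi1_neq0 psi2_neq0.
rewrite -unitmx_tr -row_free_unit; apply: inj_row_free => v /(congr1 trmx).
rewrite trmx_mul trmxK trmx0 mulmx_row_mx2.
move=> /(eigen_comb_eq0 Apsi1 Apsi2 _ _ l12 psi1_neq0 psi2_neq0)[v0 v1].
by apply/rowP => j; rewrite mxE; case: (ord2P j) => ->; [move: v0|move: v1]; rewrite mxE.
Qed.

Section TwoModes.
Context {R : realType} {n : nat}.

Lemma row_mx2_coord0_neq0 (psi1 psi2 : 'cV[R]_n) (k : 'cV[R]_2) :
  dotc psi2 psi2 = 1 ->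
  dotc (row_mx psi1 psi2 *m k) (row_mx psi1 psi2 *m k) = 1 ->
  (forall s : R, (s = 1 \/ s = -1) -> k != vec2 0 s) -> k ord0 0 != 0.
Proof.
move=> psi2_1 u_1 k_neq; apply/negP => /eqP k0.
have /eqP : k ord_max 0 ^+ 2 = 1.
  by rewrite -u_1 mulmx_row_mx2 k0 scale0r add0r dotcZ psi2_1 mulr1.
rewrite sqrf_eq1 => /orP[]/eqP k1;
  [have := k_neq 1 (or_introl erefl) | have := k_neq (-1) (or_intror erefl)];
  by rewrite {1}[k]cV2_eta k0 k1 eqxx.
Qed.

Lemma two_mode_cvg (k0 k1 q : R -> R) (l1 l2 : R) (psi1 psi2 : 'cV[R]_n) :
  l2 < l1 ->
  {within `[0, +oo[, continuous k0} -> {within `[0, +oo[, continuous k1} ->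
  {within `[0, +oo[, continuous q} ->
  (forall t : R, 0 < t -> is_derive t 1 k0 ((l1 - q t) * k0 t)) ->
  (forall t : R, 0 < t -> is_derive t 1 k1 ((l2 - q t) * k1 t)) ->
  dotc psi1 psi1 = 1 -> k0 0 != 0 ->
  (forall t : R, 0 <= t ->
     dotc (k0 t *: psi1 + k1 t *: psi2) (k0 t *: psi1 + k1 t *: psi2) = 1) ->
  exists2 s : R, (s = 1 \/ s = -1) &
    k0 t *: psi1 + k1 t *: psi2 @[t --> +oo] --> s *: psi1.
Proof.
move=> l21 ck0 ck1 cq dk0 dk1 psi1_1 k00_neq0 U_1.
pose r := k1 0 / k0 0; pose v t := psi1 + (r * expR (- ((l1 - l2) * t))) *: psi2.
have UE t : 0 <= t -> k0 t *: psi1 + k1 t *: psi2 = k0 t *: v t.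
  move=> t0; rewrite scalerDr scalerA; congr (_ + _ *: _).
  have := modes_ratio _ _ _ _ _ ck0 ck1 cq dk0 dk1 t t0; rewrite /r expRN => ratio.
  apply: (mulfI k00_neq0); apply: (mulIf (lt0r_neq0 (expR_gt0 ((l1 - l2) * t)))).
  by rewrite ratio; field; rewrite k00_neq0 lt0r_neq0 ?expR_gt0.
have v_cvg : v t @[t --> +oo] --> psi1.
  rewrite -[X in _ --> X]addr0 -[X in _ + X](scale0r psi2) -[X in X *: psi2](mulr0 r).
  apply: cvgD; first exact: cvg_cst.
  by apply: cvgZr_tmp; apply: cvgMl_tmp; apply: cvg_expRNM; rewrite subr_gt0.
have vv_cvg : dotc (v t) (v t) @[t --> +oo] --> (1 : R).
  have -> : (fun t => dotc (v t) (v t)) = (fun u => dotc u (1%:M *m u)) \o v.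
    by apply/funext => t /=; rewrite mul1mx.
  suff : ((fun u => dotc u (1%:M *m u)) \o v) t @[t --> +oo] -->
         dotc psi1 (1%:M *m psi1) by rewrite mul1mx psi1_1.
  exact: cvg_comp v_cvg (continuous_dotc_mulmx 1%:M psi1).
have k0_sqr t : 0 <= t -> k0 t ^+ 2 * dotc (v t) (v t) = 1.
  by move=> t0; rewrite -dotcZ -UE // U_1.
have k0_neq0 t : 0 <= t -> k0 t != 0.
  move=> t0; apply: contra_eq_neq (k0_sqr t t0) => ->.
  by rewrite expr0n mul0r eq_sym oner_neq0.
have k0_sqr_cvg : k0 t ^+ 2 @[t --> +oo] --> (1 : R).
  rewrite -[1 : R]invr1; apply: cvg_trans (cvgV (oner_neq0 R) vv_cvg).
  by apply: near_eq_cvg; near=> t; apply: mulr1_eq; rewrite mulrC k0_sqr.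
have [s s_pm k0_cvg] := cvg_sign_of_sqr _ ck0 k0_neq0 k0_sqr_cvg.
exists s => //; apply: cvg_trans (cvgZ k0_cvg v_cvg).
by apply: near_eq_cvg; near=> t; rewrite UE.
Unshelve. all: by end_near. Qed.

End TwoModes.

Theorem proposition4 (R : realType) (A : 'M[R]_2)
  (lambda1 lambda2 : R) (psi1 psi2 : 'cV[R]_2)
  (U : R -> 'cV[R]_2) :
  (* lambda1 > lambda2 are the (real, distinct) eigenvalues of A, with
     unit-norm eigenvectors psi1, psi2 *)
  lambda2 < lambda1 ->
  A *m psi1 = lambda1 *: psi1 -> dotc psi1 psi1 = 1 ->
  A *m psi2 = lambda2 *: psi2 -> dotc psi2 psi2 = 1 ->
  (* U solves the Oja flow on [0, +oo) with U(0)^T U(0) = 1 *)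
  {within `[0, +oo[, continuous U} ->
  (forall t : R, 0 < t -> is_derive t 1 U (oja_rhs A (U t))) ->
  dotc (U 0) (U 0) = 1 ->
  let Psi : 'M[R]_2 := row_mx psi1 psi2 in
  let Sigma : 'M[R]_2 := Psi^T *m Psi in
  let K : R -> 'cV[R]_2 := fun t => invmx Psi *m U t in
  (forall s : R, (s = 1 \/ s = -1) ->
     K 0 != vec2 0 (s * (Num.sqrt (Sigma ord_max ord_max))^-1)) ->
  exists2 s : R, (s = 1 \/ s = -1) &
    U t @[t --> +oo] --> s * (Num.sqrt (Sigma ord0 ord0))^-1 *: psi1.
Proof.
move=> l21 Apsi1 psi1_1 Apsi2 psi2_1 cU dU U0_1 Psi Sigma K K0_neq.
have Psi_unit : Psi \in unitmx.
  apply: row_mx2_eigen_unitmx Apsi1 Apsi2 _ (dotc1_neq0 _ psi1_1) (dotc1_neq0 _ psi2_1).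
  by rewrite gt_eqF.
pose q t := dotc (U t) (A *m U t); pose k i t := K t i 0.
have dk (i : 'I_2) (t : R) : 0 < t ->
    is_derive t 1 (k i) (((vec2 lambda1 lambda2)^T 0 i - q t) * k i t).
  by move=> t0; apply: oja_eigen_coord (row_mx2_eigen Apsi1 Apsi2) (dU t t0).
have dk0 (t : R) : 0 < t -> is_derive t 1 (k ord0) ((lambda1 - q t) * k ord0 t).
  by move=> t0; have := dk ord0 t t0; rewrite !mxE.
have dk1 (t : R) : 0 < t -> is_derive t 1 (k ord_max) ((lambda2 - q t) * k ord_max t).
  by move=> t0; have := dk ord_max t t0; rewrite !mxE.
have ck (i : 'I_2) : {within `[0, +oo[, continuous (k i)}.
  exact: within_continuous_mulmx_coord.
have PsiK t : Psi *m K t = U t by rewrite mulmxA mulmxV // mul1mx.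
have U_1 := oja_sqnorm_invariant _ _ cU dU U0_1.
have k00_neq0 : k ord0 0 != 0.
  apply: (row_mx2_coord0_neq0 psi1 psi2 _ psi2_1); first by rewrite PsiK U0_1.
  by move=> s s_pm; have := K0_neq s s_pm; rewrite row_mx2_gram11 psi2_1 sqrtr1 invr1 mulr1.
have UE t : U t = k ord0 t *: psi1 + k ord_max t *: psi2 by rewrite -PsiK mulmx_row_mx2.
have [|s s_pm U_cvg] := two_mode_cvg _ _ _ _ _ psi1 psi2 l21 (ck ord0) (ck ord_max)
  (within_continuous_dotc_mulmx _ A U cU) dk0 dk1 psi1_1 k00_neq0.
  by move=> t t0; rewrite -UE U_1.
exists s => //; rewrite row_mx2_gram00 psi1_1 sqrtr1 invr1 mulr1.
by under eq_cvg do rewrite UE.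
Qed.
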